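(* Let $D\ge1$, let $Q_D$ be the $D$-dimensional hypercube on $X=\{0,1\}^D$ with adjacency matrix $A$, and let $B$ be a real matrix with rows and columns indexed by $X$. Then $B$ is $A$-like if and only if $B$ commutes with $A$ and $$\alpha^*_i\alpha^*_jB-\alpha^*_iB\alpha^*_j-\alpha^*_jB\alpha^*_i+B\alpha^*_i\alpha^*_j=0\qquad(1\le i<j\le D).$$
   Context: $Q_D$ is the graph with vertex set $X=\{0,1\}^D$ (sequences $x=(x_1,\ldots,x_D)$), two vertices adjacent iff they differ in exactly one coordinate. A matrix $B$ is $A$-like if $BA=AB$ and $B_{xy}=0$ for all $x,y\in X$ that are neither equal nor adjacent. For $1\le i\le D$, $\alpha^*_i$ is the diagonal matrix with $(x,x)$-entry $1$ if $x_i=0$ and $-1$ if $x_i=1$. *)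

From mathcomp Require Import all_boot all_order all_algebra.
Set Implicit Arguments. Unset Strict Implicit. Unset Printing Implicit Defensive.
Import Order.TTheory GRing.Theory Num.Theory.
Local Open Scope ring_scope.

(* Vertex set X = {0,1}^D, coordinates indexed by 'I_D (coordinate i+1 of the
   paper is index i here); false = 0, true = 1. *)
Definition cube (D : nat) := {ffun 'I_D -> bool}.

Definition cmx (R : Type) (D : nat) := 'M[R]_(#|cube D|, #|cube D|).

Definition cent (R : Type) (D : nat) (B : cmx R D) (x y : cube D) : R :=
  B (enum_rank x) (enum_rank y).

Definition cmk (R : Type) (D : nat) (f : cube D -> cube D -> R) : cmx R D :=
  \matrix_(i, j) f (enum_val i) (enum_val j).

Definition hdist (D : nat) (x y : cube D) : nat := #|[set i | x i != y i]|.
Definition adjQ (D : nat) (x y : cube D) : bool := hdist x y == 1%N.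

Definition adjA (R : pzRingType) (D : nat) : cmx R D :=
  cmk (fun x y => if adjQ x y then 1 else 0).

Definition A_like (R : pzRingType) (D : nat) (B : cmx R D) : Prop :=
  B *m adjA R D = adjA R D *m B /\
  forall x y : cube D, x != y -> ~~ adjQ x y -> cent B x y = 0.

Definition alpha_star (R : pzRingType) (D : nat) (i : 'I_D) : cmx R D :=
  cmk (fun x y => if x == y then (if x i then -1 else 1) else 0).

From mathcomp Require Import all_boot all_order all_algebra.
From mathcomp Require Import ring.

Set Implicit Arguments.
Unset Strict Implicit.
Unset Printing Implicit Defensive.
Import Order.TTheory GRing.Theory Num.Theory.
Local Open Scope ring_scope.

(* Each [alpha_star i] is diagonal with entries [s_i(x) = +-1], so the
   double commutator [a_i a_j B - a_i B a_j - a_j B a_i + B a_i a_j] has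
   (x, y)-entry [(s_i(x) - s_i(y)) (s_j(x) - s_j(y)) B_xy].  This vanishes
   for all [i < j] exactly when [B_xy = 0] whenever [x] and [y] differ in at
   least two coordinates, i.e. are neither equal nor adjacent. *)

Definition mx_dcomm (R : pzRingType) (n : nat) (P Q B : 'M[R]_n) : 'M[R]_n :=
  P *m Q *m B - P *m B *m Q - Q *m B *m P + B *m P *m Q.

Lemma diag_mx_dcommE (R : comPzRingType) (n : nat) (d e : 'rV[R]_n)
    (B : 'M[R]_n) (r c : 'I_n) :
  mx_dcomm (diag_mx d) (diag_mx e) B r c
  = (d 0 r - d 0 c) * (e 0 r - e 0 c) * B r c.
Proof.
rewrite /mx_dcomm -(mulmxA (diag_mx d)) !(mul_diag_mx, mul_mx_diag) !mxE.
ring.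
Qed.

Section HammingDistance.

Variable D : nat.
Implicit Types x y : cube D.

Lemma hdist_eq0 x y : (hdist x y == 0)%N = (x == y).
Proof.
rewrite /hdist cards_eq0; apply/eqP/eqP => [diff0|->]; last first.
  by apply/setP => i; rewrite !inE eqxx.
apply/ffunP => i; apply/eqP/negP => xy_i.
by have := in_set0 i; rewrite -diff0 inE => /negP.
Qed.

Lemma hdist_gt1 x y : (1 < hdist x y)%N = (x != y) && ~~ adjQ x y.
Proof. by rewrite -hdist_eq0 /adjQ; case: hdist => [|[]]. Qed.

Lemma hdist_gt1P x y :
  reflect (exists i j : 'I_D, [/\ (i < j)%N, x i != y i & x j != y j])
          (1 < hdist x y)%N.
Proof.
apply: (iffP card_gt1P) => [[i [j []]]|[i [j [lt_ij xy_i xy_j]]]]; last first.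
  by exists i, j; rewrite !inE xy_i xy_j -(inj_eq val_inj) neq_ltn lt_ij.
rewrite !inE; case: (ltngtP i j) => [lt_ij|lt_ji|/val_inj->]; last by rewrite eqxx.
- by move=> xy_i xy_j _; exists i, j.
- by move=> xy_i xy_j _; exists j, i.
Qed.

End HammingDistance.

Definition cube_sign (R : pzRingType) (D : nat) (i : 'I_D) (x : cube D) : R :=
  if x i then -1 else 1.

Lemma cube_sign_inj (R : numDomainType) (D : nat) (i : 'I_D) (x y : cube D) :
  (cube_sign R i x == cube_sign R i y) = (x i == y i).
Proof.
have neq_m11 : (-1 : R) != 1.
  by rewrite -subr_eq0 -opprD oppr_eq0 -[1 + 1]/(2%:R : R) pnatr_eq0.
by rewrite /cube_sign; case: (x i); case: (y i);
  rewrite ?eqxx ?(negPf neq_m11) // eq_sym (negPf neq_m11).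
Qed.

Lemma alpha_starE (R : pzRingType) (D : nat) (i : 'I_D) :
  alpha_star R i
  = diag_mx (\row_k cube_sign R i (@enum_val (cube D) _ k)).
Proof.
apply/matrixP => r c; rewrite !mxE (inj_eq enum_val_inj).
by case: eqP => [->|]; rewrite ?mulr1n ?mulr0n.
Qed.

Lemma alpha_star_dcommE (R : comPzRingType) (D : nat) (i j : 'I_D)
    (B : cmx R D) (x y : cube D) :
  cent (mx_dcomm (alpha_star R i) (alpha_star R j) B) x y
  = (cube_sign R i x - cube_sign R i y) * (cube_sign R j x - cube_sign R j y)
    * cent B x y.
Proof. by rewrite /cent !alpha_starE diag_mx_dcommE !mxE !enum_rankK. Qed.

Lemma cent_eq0P (R : nmodType) (D : nat) (M : cmx R D) :
  M = 0 <-> (forall x y : cube D, cent M x y = 0).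
Proof.
split => [-> x y | M0]; first by rewrite /cent mxE.
apply/matrixP => r c.
by have := M0 (enum_val r) (enum_val c); rewrite /cent !enum_valK mxE.
Qed.

Lemma alpha_star_dcomm_eq0 (R : numDomainType) (D : nat) (i j : 'I_D)
    (B : cmx R D) :
  mx_dcomm (alpha_star R i) (alpha_star R j) B = 0
  <-> (forall x y : cube D, x i != y i -> x j != y j -> cent B x y = 0).
Proof.
have entry_eq0 x y :
    (cent (mx_dcomm (alpha_star R i) (alpha_star R j) B) x y == 0)
    = [|| x i == y i, x j == y j | cent B x y == 0].
  by rewrite alpha_star_dcommE !mulf_eq0 !subr_eq0 !cube_sign_inj orbA.
rewrite cent_eq0P; split => [E0 x y xy_i xy_j | B0 x y].
  by apply/eqP; move: (entry_eq0 x y); rewrite E0 eqxx (negPf xy_i) (negPf xy_j).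
apply/eqP; rewrite entry_eq0.
by case: eqP => //= /eqP xy_i; case: eqP => //= /eqP xy_j; rewrite B0.
Qed.

Theorem proposition7p3 (R : realFieldType) (D : nat) (hD : (1 <= D)%N)
  (B : cmx R D) :
  A_like B <->
  (B *m adjA R D = adjA R D *m B /\
   forall i j : 'I_D, (i < j)%N ->
     alpha_star R i *m alpha_star R j *m B - alpha_star R i *m B *m alpha_star R j
     - alpha_star R j *m B *m alpha_star R i + B *m alpha_star R i *m alpha_star R j
     = 0).
Proof.
split=> -[commA B0]; split=> //.
- move=> i j lt_ij; apply/alpha_star_dcomm_eq0 => x y xy_i xy_j.
  have : (1 < hdist x y)%N by apply/hdist_gt1P; exists i, j.
  by rewrite hdist_gt1 => /andP[xy nadj]; apply: B0.
- move=> x y xy nadj.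
  have /hdist_gt1P[i [j [lt_ij xy_i xy_j]]] : (1 < hdist x y)%N.
    by rewrite hdist_gt1 xy.
  exact: (alpha_star_dcomm_eq0 i j B).1 (B0 i j lt_ij) x y xy_i xy_j.
Qed.
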